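(* For $i=1,2$ let $(\sigma_i,\varepsilon_i)$ be admissible pairs of $K$ and $q_i:V\to\overline K^{\sigma_i,\varepsilon_i}/\overline R_i$ non-trivial generalized $(\sigma_i,\varepsilon_i)$-quadratic forms with $S_{q_1}=S_{q_2}$. Assume that the polar space $S:=S_{q_1}=S_{q_2}$ has non-degenerate rank at least $2$. Then $q_1$ and $q_2$ are proportional: there is $\kappa\in K\setminus\{0\}$ such that $\sigma_2(t)=\kappa\sigma_1(t)\kappa^{-1}$ for all $t$, $\varepsilon_2=\kappa\kappa^{-\sigma_1}\varepsilon_1$, $\overline R_2=\kappa\overline R_1$, and $q_2(x)=\kappa q_1(x)$ for all $x\in V$.
   Context: $K$ division ring, $V$ right $K$-vector space. Admissible pair $(\sigma,\varepsilon)$: $\sigma$ anti-automorphism, $\varepsilon^\sigma\varepsilon=1$, $t^{\sigma^2}=\varepsilon t\varepsilon^{-1}$. $K_{\sigma,\varepsilon}=\{t-t^\sigma\varepsilon\}$, $\overline K^{\sigma,\varepsilon}=K/K_{\sigma,\varepsilon}$, $\bar t$ class of $t$, $\bar t\circ\lambda=\overline{\lambda^\sigma t\lambda}$; closed subgroups: stable under all $\circ\lambda$. If $(\sigma_2,\varepsilon_2)$ is obtained from $(\sigma_1,\varepsilon_1)$ via $\kappa$ as in the claim, then $\kappa K_{\sigma_1,\varepsilon_1}=K_{\sigma_2,\varepsilon_2}$, so left multiplication by $\kappa$ induces a group isomorphism $\overline K^{\sigma_1,\varepsilon_1}\to\overline K^{\sigma_2,\varepsilon_2}$; $\kappa\overline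 R_1$ and $\kappa q_1(x)$ are understood via this map. A generalized $(\sigma,\varepsilon)$-quadratic form with co-defect closed $\overline R$: $q:V\to\overline K^{\sigma,\varepsilon}/\overline R$ with $q(x\lambda)=q(x)\circ\lambda$ and a trace-valued $(\sigma,\varepsilon)$-sesquilinear $f$ ($f(x\lambda,y\mu)=\lambda^\sigma f(x,y)\mu$, $f(y,x)=f(x,y)^\sigma\varepsilon$, $f(x,x)\in\{t+t^\sigma\varepsilon\}$) with $q(x+y)=q(x)+q(y)+(\overline{f(x,y)}+\overline R)$. Non-trivial: not identically $\overline R$. $S_q$: the point-line geometry of points $[x]$ with $q(x)=\overline R$ and lines of $\mathrm{PG}(V)$ consisting of such points; it is a polar space. The non-degenerate rank of a polar space is the rank of its quotient over its radical. *)

From HB Require Import structures.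
From mathcomp Require Import all_boot all_order all_algebra.
Set Implicit Arguments. Unset Strict Implicit. Unset Printing Implicit Defensive.
Import GRing.Theory.
Local Open Scope ring_scope.

Definition divring_axiom (K : unitRingType) := forall x : K, x != 0 -> x \is a GRing.unit.

(* A right K-vector space V is a left module over the converse ring K^c;
   right scalar multiplication  x * l  is rendered  rscale x l. *)
Definition rscale (K : unitRingType) (V : lmodType K^c) (x : V) (l : K) : V :=
  (l : K^c) *: x.

Section Defs.
Variables (K : unitRingType) (V : lmodType K^c).

Definition anti_automorphism (s : K -> K) :=
  [/\ forall a b, s (a + b) = s a + s b,
      forall a b, s (a * b) = s b * s a
    & bijective s].

Definition admissible (s : K -> K) (e : K) :=
  [/\ anti_automorphism s, s e * e = 1 & forall t, s (s t) = e * t * e^-1].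

Definition in_Kse (s : K -> K) (e : K) (t : K) := exists u, t = u - s u * e.

Definition trace_val (s : K -> K) (e : K) (t : K) := exists u, t = u + s u * e.

(* R is the preimage in K of a closed subgroup Rbar of Kbar = K / K_{sigma,eps}:
   an additive subgroup of K containing K_{sigma,eps} and stable under
   t |-> l^sigma t l. *)
Definition closed_codefect (s : K -> K) (e : K) (R : K -> Prop) :=
  [/\ R 0, forall a b, R a -> R b -> R (a - b),
      forall t, in_Kse s e t -> R t
    & forall t l, R t -> R (s l * t * l)].

Definition sesq_trace (s : K -> K) (e : K) (f : V -> V -> K) :=
  [/\ forall x y z, f (x + y) z = f x z + f y z,
      forall x y z, f x (y + z) = f x y + f x z,
      forall x y l m, f (rscale x l) (rscale y m) = s l * f x y * m,
      forall x y, f y x = s (f x y) * e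
    & forall x, trace_val s e (f x x)].

(* Generalized (sigma,eps)-quadratic form q : V -> Kbar / Rbar with co-defect
   Rbar, represented by a lift q : V -> K (q(x) is the class of q x modulo R,
   the preimage of Rbar in K). *)
Definition gen_quad_form (s : K -> K) (e : K) (R : K -> Prop) (q : V -> K) :=
  [/\ closed_codefect s e R,
      forall x l, R (q (rscale x l) - s l * q x * l)
    & exists f, sesq_trace s e f /\
        forall x y, R (q (x + y) - q x - q y - f x y)].

Definition nontrivial (R : K -> Prop) (q : V -> K) := exists x, ~ R (q x).

Definition singular (R : K -> Prop) (q : V -> K) (x : V) := R (q x).

Definition sing_span (R : K -> Prop) (q : V -> K) (x y : V) :=
  forall a b, singular R q (rscale x a + rscale y b).

Definition indep (x y : V) :=
  forall a b, rscale x a + rscale y b = 0 -> a = 0 /\ b = 0.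

Definition is_line (R : K -> Prop) (q : V -> K) (x y : V) :=
  indep x y /\ sing_span R q x y.

Definition radical_point (R : K -> Prop) (q : V -> K) (r : V) :=
  [/\ r != 0, singular R q r &
      forall y, y != 0 -> singular R q y -> sing_span R q r y].

(* The quotient of S_q over its radical has rank >= 2, i.e. has a line;
   equivalently S_q has a line containing no point of the radical. *)
Definition nondeg_rank_ge2 (R : K -> Prop) (q : V -> K) :=
  exists x y, is_line R q x y /\
    forall a b, (a != 0 \/ b != 0) -> ~ radical_point R q (rscale x a + rscale y b).

(* S_{q1} = S_{q2}: same point sets (lines are determined by the points). *)
Definition same_polar_space (R1 : K -> Prop) (q1 : V -> K) (R2 : K -> Prop) (q2 : V -> K) :=
  forall x, x != 0 -> (singular R1 q1 x <-> singular R2 q2 x).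

End Defs.

From HB Require Import structures.
From mathcomp Require Import all_boot all_order all_algebra.
From Stdlib Require Import Classical.
Set Implicit Arguments. Unset Strict Implicit. Unset Printing Implicit Defensive.
Import GRing.Theory.
Local Open Scope ring_scope.

(* For a singular vector u, the value of q along a |-> u a + z is constant
   modulo R when f (u, z) = 0 and runs through every class otherwise.  Since q1
   and q2 have the same singular vectors, f1 (u, -) and f2 (u, -) then have the
   same kernel, so f2 (u, -) = k_u f1 (u, -) at every point u off the radical.
   On a line <p1, p2> of S avoiding the radical the factors at p1 a, p2 and
   p1 a + p2 must agree, which gives a single k with s2 (a) k = k s1 (a); a
   point of the line orthogonal to a partner w of p1 carries k over to w.
   Hermitian symmetry of f at (p1, w) then yields e2, and expanding q along
   p1, where f1 (p1, -) takes every value, identifies R2 with k R1 and q2 with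
   k q1. *)

Section DivisionRing.
Variable K : unitRingType.
Hypothesis hK : divring_axiom K.

Lemma divr_lreg (a : K) : a != 0 -> GRing.lreg a. Proof. by move/hK/mulrI. Qed.
Lemma divr_rreg (a : K) : a != 0 -> GRing.rreg a. Proof. by move/hK/mulIr. Qed.

Lemma divr_mulf_neq0 (a b : K) : a != 0 -> b != 0 -> a * b != 0.
Proof. by move=> a0 b0; rewrite (mulrI_eq0 _ (divr_lreg a0)). Qed.

End DivisionRing.

Section AntiMorphism.
Variables (K : unitRingType) (s : K -> K).
Hypothesis hs : anti_automorphism s.

Lemma antimorphD a b : s (a + b) = s a + s b. Proof. by case: hs. Qed.
Lemma antimorphM a b : s (a * b) = s b * s a. Proof. by case: hs. Qed.
Lemma antimorph_inj : injective s. Proof. by case: hs => _ _ /bij_inj. Qed.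
Lemma antimorph_surj t : exists a, s a = t.
Proof. by case: hs => _ _ [g _ sg]; exists (g t). Qed.

Lemma antimorph0 : s 0 = 0.
Proof. by apply: (addrI (s 0)); rewrite -antimorphD !addr0. Qed.
Lemma antimorph1 : s 1 = 1.
Proof.
have [b sb1] := antimorph_surj 1.
by have := antimorphM b 1; rewrite mulr1 sb1 mulr1 => /esym.
Qed.
Lemma antimorph_eq0 a : (s a == 0) = (a == 0).
Proof. by rewrite -{1}antimorph0 (inj_eq antimorph_inj). Qed.

Hypothesis hK : divring_axiom K.

Lemma antimorphV a : a != 0 -> s a^-1 = (s a)^-1.
Proof.
move=> a0; have sa0 : s a != 0 by rewrite antimorph_eq0.
apply: (divr_rreg hK sa0).
by rewrite -antimorphM mulrV ?hK // antimorph1 mulVr ?hK.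
Qed.

End AntiMorphism.

Lemma admissible_eps_neq0 (K : unitRingType) (s : K -> K) (e : K) :
  admissible s e -> e != 0.
Proof.
case=> _ see _; apply/eqP => e0.
by move: see; rewrite e0 mulr0 => /eqP; rewrite eq_sym oner_eq0.
Qed.

Section RightLinear.
Variables (K : unitRingType) (V : lmodType K^c).

Lemma rscale1 (x : V) : rscale x 1 = x. Proof. exact: scale1r. Qed.
Lemma rscale0 (x : V) : rscale x 0 = 0. Proof. exact: scale0r. Qed.

Definition right_linear (phi : V -> K) :=
  forall y z m, phi (y + rscale z m) = phi y + phi z * m.

Hypothesis hK : divring_axiom K.

Lemma right_linear_ker_sub (phi psi : V -> K) w :
  right_linear phi -> right_linear psi -> phi w != 0 ->
  (forall y, phi y = 0 -> psi y = 0) -> exists mu, forall y, psi y = mu * phi y.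
Proof.
move=> lin_phi lin_psi phi_w ker; exists (psi w * (phi w)^-1) => y.
set m := - ((phi w)^-1 * phi y).
have : phi (y + rscale w m) = 0 by rewrite lin_phi /m mulrN mulVKr ?hK ?subrr.
by move/ker; rewrite lin_psi /m mulrN mulrA => /subr0_eq.
Qed.

End RightLinear.

Section Sesquilinear.
Variables (K : unitRingType) (V : lmodType K^c).
Variables (s : K -> K) (e : K) (f : V -> V -> K).
Hypotheses (hs : anti_automorphism s) (hf : sesq_trace s e f).

Lemma sesqDl x y z : f (x + y) z = f x z + f y z. Proof. by case: hf. Qed.
Lemma sesqDr x y z : f x (y + z) = f x y + f x z. Proof. by case: hf. Qed.
Lemma sesq_herm x y : f y x = s (f x y) * e. Proof. by case: hf. Qed.

Lemma sesqZl x y l : f (rscale x l) y = s l * f x y.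
Proof. by case: hf => _ _ /(_ x y l 1); rewrite rscale1 mulr1. Qed.
Lemma sesqZr x y m : f x (rscale y m) = f x y * m.
Proof. by case: hf => _ _ /(_ x y 1 m); rewrite rscale1 antimorph1 // mul1r. Qed.

Lemma sesq_combl x y a b z :
  f (rscale x a + rscale y b) z = s a * f x z + s b * f y z.
Proof. by rewrite sesqDl !sesqZl. Qed.

Lemma sesq_right_linear x : right_linear (f x).
Proof. by move=> y z m; rewrite sesqDr sesqZr. Qed.

Hypothesis hK : divring_axiom K.

Lemma sesq_separating x y w : f y w != 0 ->
    (forall c, exists z, f (x + rscale y c) z != 0) ->
  exists v, f y v = 0 /\ f x v != 0.
Proof.
move=> yw nondeg; apply: NNPP => nosep.
have ker v : f y v = 0 -> f x v = 0.
  by move=> yv; apply/eqP/negPn/negP => xv; apply: nosep; exists v.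
have [mu mu_xy] := right_linear_ker_sub hK (sesq_right_linear y)
  (sesq_right_linear x) yw ker.
have [c sc] := antimorph_surj hs (- mu).
have [z] := nondeg c.
by rewrite sesqDl sesqZl sc mu_xy mulNr addrN eqxx.
Qed.

End Sesquilinear.

Definition eqmod (K : unitRingType) (R : K -> Prop) (a b : K) := R (a - b).

Section Codefect.
Variables (K : unitRingType) (s : K -> K) (e : K) (R : K -> Prop).
Hypothesis hR : closed_codefect s e R.

Lemma codefect0 : R 0. Proof. by case: hR. Qed.
Lemma codefectB a b : R a -> R b -> R (a - b).
Proof. by case: hR => _ + _ _; apply. Qed.
Lemma codefectN a : R a -> R (- a).
Proof. by move=> Ra; rewrite -sub0r; apply: codefectB => //; apply: codefect0.
Qed.
Lemma codefectD a b : R a -> R b -> R (a + b).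
Proof.
by move=> Ra Rb; rewrite -[b]opprK; apply: codefectB => //; apply: codefectN.
Qed.
Lemma codefect_conj t l : R t -> R (s l * t * l).
Proof. by case: hR => _ _ _; apply. Qed.

Lemma eqmod_sym a b : eqmod R a b -> eqmod R b a.
Proof. by move=> ab; rewrite /eqmod -opprB; apply: codefectN. Qed.
Lemma eqmod_trans a b c : eqmod R a b -> eqmod R b c -> eqmod R a c.
Proof. by move=> ab bc; have := codefectD ab bc; rewrite addrA subrK. Qed.
Lemma eqmod_add2r c a b : eqmod R (a + c) (b + c) <-> eqmod R a b.
Proof. by rewrite /eqmod opprD addrACA subrr addr0. Qed.

Lemma eqmodP a b : eqmod R a b -> R a <-> R b.
Proof.
move=> ab; split=> [Ra | Rb]; last by have := codefectD ab Rb; rewrite subrK.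
by have := codefectB Ra ab; rewrite opprB addrC subrK.
Qed.

End Codefect.

Section QuadraticForm.
Variables (K : unitRingType) (V : lmodType K^c).

(* The data of gen_quad_form with its polar form f made explicit; of the
   nontriviality of q only its consequence that R is not all of K is kept. *)
Record quadratic_form (s : K -> K) (e : K) (R : K -> Prop) (q : V -> K)
    (f : V -> V -> K) : Prop := QuadraticForm {
  qf_admissible : admissible s e;
  qf_codefect : closed_codefect s e R;
  qf_scale : forall x l, R (q (rscale x l) - s l * q x * l);
  qf_sesq : sesq_trace s e f;
  qf_polar : forall x y, R (q (x + y) - q x - q y - f x y);
  qf_proper : exists t, ~ R t }.

Variables (s : K -> K) (e : K) (R : K -> Prop) (q : V -> K) (f : V -> V -> K).
Hypothesis G : quadratic_form s e R q f.

Lemma qf_anti : anti_automorphism s. Proof. by case: (qf_admissible G). Qed.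
Local Notation hs := qf_anti.
Local Notation hR := (qf_codefect G).
Local Notation hf := (qf_sesq G).

Lemma singularZ x a : singular R q x -> singular R q (rscale x a).
Proof.
move=> Rx; have := codefectD hR (qf_scale G x a) (codefect_conj hR a Rx).
by rewrite subrK.
Qed.

Lemma singular0 : singular R q 0.
Proof. by have := qf_scale G 0 0; rewrite rscale0 mulr0 subr0. Qed.

Lemma qf_expand x a v : singular R q x ->
  eqmod R (q (rscale x a + v)) (q v + s a * f x v).
Proof.
move=> Rx; rewrite -(sesqZl hf).
have polar :
    eqmod R (q (rscale x a + v)) (q (rscale x a) + q v + f (rscale x a) v).
  by rewrite /eqmod !opprD !addrA; exact: (qf_polar G).
apply: (eqmod_trans hR polar).
by rewrite /eqmod -[X in X - _]addrA addrK; apply: singularZ.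
Qed.

Hypothesis hK : divring_axiom K.

Lemma sing_spanP x y : singular R q x -> singular R q y ->
  sing_span R q x y <-> f x y = 0.
Proof.
move=> Rx Ry; split=> [span | fxy a b]; last first.
  apply/(eqmodP hR (qf_expand a _ Rx)).
  by rewrite (sesqZr hs hf) fxy mul0r mulr0 addr0; apply: singularZ.
apply/eqP/negPn/negP => fxy; have [t Nt] := qf_proper G; apply: Nt.
set y' := rscale y ((f x y)^-1 * t).
have shift : eqmod R (q (rscale x 1 + y')) (q y' + t).
  have := qf_expand 1 y' Rx.
  by rewrite /y' (sesqZr hs hf) (mulVKr (hK fxy)) (antimorph1 hs) mul1r.
have drop : eqmod R (q y' + t) t by rewrite /eqmod addrK; apply: singularZ.
by apply/(eqmodP hR (eqmod_trans hR shift drop)); apply: span.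
Qed.

Lemma nonradical_partner r : r != 0 -> singular R q r ->
  ~ radical_point R q r -> exists w, singular R q w /\ f r w != 0.
Proof.
move=> r0 Rr nonrad; apply: NNPP => nopartner.
apply: nonrad; split=> // w _ Rw; apply/sing_spanP => //.
by apply/eqP/negPn/negP => rw; apply: nopartner; exists w.
Qed.

Section Line.
Variables p1 p2 : V.
Hypothesis line : is_line R q p1 p2.
Hypothesis nonrad : forall a b, (a != 0 \/ b != 0) ->
  ~ radical_point R q (rscale p1 a + rscale p2 b).

Lemma line_singular1 : singular R q p1.
Proof. by case: line => _ /(_ 1 0); rewrite rscale1 rscale0 addr0. Qed.
Lemma line_singular2 : singular R q p2.
Proof. by case: line => _ /(_ 0 1); rewrite rscale1 rscale0 add0r. Qed.

Lemma line_partner a b : a != 0 \/ b != 0 ->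
  exists w, singular R q w /\ f (rscale p1 a + rscale p2 b) w != 0.
Proof.
move=> ab; case: line => indep_p span.
apply: nonradical_partner (nonrad ab) => //.
by apply/eqP => /indep_p [a0 b0]; case: ab; rewrite ?a0 ?b0 eqxx.
Qed.

Lemma line_partner1 : exists w, singular R q w /\ f p1 w != 0.
Proof.
have := @line_partner 1 0 (or_introl (oner_neq0 K)).
by rewrite rscale1 rscale0 addr0.
Qed.
Lemma line_partner2 : exists w, singular R q w /\ f p2 w != 0.
Proof.
have := @line_partner 0 1 (or_intror (oner_neq0 K)).
by rewrite rscale1 rscale0 add0r.
Qed.

Lemma line_separating : exists v, f p2 v = 0 /\ f p1 v != 0.
Proof.
have [w [_ p2w]] := line_partner2; apply: (sesq_separating hs hf hK p2w) => c.
have [z [_ ]] := @line_partner 1 c (or_introl (oner_neq0 K)).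
by rewrite rscale1; exists z.
Qed.

Lemma line_orthogonal1 a b : f (rscale p1 a + rscale p2 b) p1 = 0.
Proof.
have f11 : f p1 p1 = 0.
  apply/(sing_spanP line_singular1 line_singular1) => c d.
  by rewrite -scalerDl; apply: singularZ line_singular1.
have f21 : f p2 p1 = 0.
  apply/(sing_spanP line_singular2 line_singular1) => c d.
  by rewrite addrC; case: line => _; apply.
by rewrite (sesq_combl hf) f11 f21 !mulr0 addr0.
Qed.

End Line.

End QuadraticForm.

Definition proportional_at (K : unitRingType) (V : lmodType K^c)
  (f1 f2 : V -> V -> K) (k : K) (u : V) := forall y, f2 u y = k * f1 u y.

Section KernelTransfer.
Variables (K : unitRingType) (V : lmodType K^c).
Hypothesis hK : divring_axiom K.
Variables (s1 s2 : K -> K) (e1 e2 : K) (R1 R2 : K -> Prop) (q1 q2 : V -> K)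
  (f1 f2 : V -> V -> K).
Hypotheses (G1 : quadratic_form s1 e1 R1 q1 f1)
  (G2 : quadratic_form s2 e2 R2 q2 f2).
Hypothesis same : forall x, singular R1 q1 x <-> singular R2 q2 x.

(* Along a |-> u a + z the value of q1 is constant mod R1, while that of q2
   would run through all of K mod R2 if f2 (u, z) were nonzero. *)
Lemma polar_ker_transfer u :
  singular R1 q1 u -> forall z, f1 u z = 0 -> f2 u z = 0.
Proof.
move=> R1u z f1uz; apply/eqP/negPn/negP => d0; set d := f2 u z in d0.
have sweep t : R2 t <-> R1 (q1 z).
  have [a sa] := antimorph_surj (qf_anti G2) ((t - q2 z) * d^-1).
  have E1 := qf_expand G1 a z R1u; rewrite f1uz mulr0 addr0 in E1.
  have E2 := qf_expand G2 a z (proj1 (same u) R1u).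
  rewrite -/d sa divrK ?hK // (addrC (q2 z)) subrK in E2.
  rewrite -(eqmodP (qf_codefect G2) E2) -(eqmodP (qf_codefect G1) E1).
  exact: iff_sym (same _).
have [t Nt] := qf_proper G2; apply: Nt.
by apply/sweep/sweep; apply: codefect0 (qf_codefect G2).
Qed.

End KernelTransfer.

Section TwoForms.
Variables (K : unitRingType) (V : lmodType K^c).
Hypothesis hK : divring_axiom K.
Variables (s1 s2 : K -> K) (e1 e2 : K) (R1 R2 : K -> Prop) (q1 q2 : V -> K)
  (f1 f2 : V -> V -> K).
Hypotheses (G1 : quadratic_form s1 e1 R1 q1 f1)
  (G2 : quadratic_form s2 e2 R2 q2 f2).
Hypothesis same : forall x, singular R1 q1 x <-> singular R2 q2 x.

Local Notation hs1 := (qf_anti G1).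
Local Notation hf1 := (qf_sesq G1).
Local Notation hf2 := (qf_sesq G2).
Local Notation hR1 := (qf_codefect G1).
Local Notation hR2 := (qf_codefect G2).

Lemma exists_proportional_at u w : singular R1 q1 u -> f1 u w != 0 ->
  exists2 k, k != 0 & proportional_at f1 f2 k u.
Proof.
move=> R1u uw.
have [k ku] := right_linear_ker_sub hK (sesq_right_linear hs1 hf1 u)
  (sesq_right_linear (qf_anti G2) hf2 u) uw
  (polar_ker_transfer hK G1 G2 same R1u).
exists k => //; apply/eqP => k0; move/eqP: uw; apply.
have same21 x : singular R2 q2 x <-> singular R1 q1 x by apply: iff_sym.
apply: (polar_ker_transfer hK G2 G1 same21 (proj1 (same u) R1u)).
by rewrite ku k0 mul0r.
Qed.

Lemma proportional_at_eq a b u u' y y' :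
    proportional_at f1 f2 a u -> proportional_at f1 f2 b u' ->
    singular R1 q1 (u + u') -> f1 u y != 0 -> f1 u' y = 0 -> f1 u' y' != 0 ->
  a = b.
Proof.
move=> au bu' R1uu' uy u'y u'y'.
have uu'y : f1 (u + u') y != 0 by rewrite (sesqDl hf1) u'y addr0.
have [c _ cuu'] := exists_proportional_at R1uu' uu'y.
have sum z : a * f1 u z + b * f1 u' z = c * (f1 u z + f1 u' z).
  by rewrite -au -bu' -(sesqDl hf1) -(sesqDl hf2) cuu'.
have ac : a = c.
  by apply: (divr_rreg hK uy); have := sum y; rewrite u'y !mulr0 !addr0.
by have := sum y'; rewrite -ac mulrDr => /addrI /(divr_rreg hK u'y').
Qed.

Lemma proportional_at_twist k p a y :
    proportional_at f1 f2 k p -> proportional_at f1 f2 k (rscale p a) ->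
    f1 p y != 0 ->
  s2 a * k = k * s1 a.
Proof.
move=> kp kpa py; apply: (divr_rreg hK py).
by have := kpa y; rewrite (sesqZl hf1) (sesqZl hf2) kp !mulrA.
Qed.

Section Twist.
Variable k : K.
Hypothesis twist : forall a, s2 a * k = k * s1 a.

Lemma proportional_at_comb x y a b :
    proportional_at f1 f2 k x -> proportional_at f1 f2 k y ->
  proportional_at f1 f2 k (rscale x a + rscale y b).
Proof.
move=> kx ky z.
by rewrite (sesq_combl hf1) (sesq_combl hf2) kx ky !mulrA !twist mulrDr !mulrA.
Qed.

Hypothesis k0 : k != 0.

Lemma twist_conj t : s2 t = k * s1 t * k^-1.
Proof. by rewrite -twist mulrK ?hK. Qed.

Lemma proportional_at_eps u w :
    proportional_at f1 f2 k u -> proportional_at f1 f2 k w -> f1 u w != 0 ->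
  e2 = k * s1 k^-1 * e1.
Proof.
move=> ku kw uw; have := sesq_herm hf2 u w.
rewrite kw ku (sesq_herm hf1 u w) (antimorphM (qf_anti G2)) !twist_conj.
have sk0 : s1 k != 0 by rewrite (antimorph_eq0 hs1).
have d0 : s1 (f1 u w) != 0 by rewrite (antimorph_eq0 hs1).
rewrite -!mulrA mulKr ?hK // => /(divr_lreg hK k0)/(divr_lreg hK d0) ->.
by rewrite (antimorphV hs1 hK k0) mulKr ?hK // mulVKr ?hK.
Qed.

Lemma singular_shift p z : singular R1 q1 p -> proportional_at f1 f2 k p ->
  f1 p z != 0 -> forall t, R1 (q1 z + t) <-> R2 (q2 z + k * t).
Proof.
move=> R1p kp pz t; have [a sa] := antimorph_surj hs1 (t * (f1 p z)^-1).
have E1 := qf_expand G1 a z R1p; rewrite sa divrK ?hK // in E1.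
have E2 := qf_expand G2 a z (proj1 (same p) R1p).
rewrite kp mulrA twist -mulrA sa divrK ?hK // in E2.
by rewrite -(eqmodP hR1 E1) -(eqmodP hR2 E2); apply: same.
Qed.

Lemma codefect_transfer p w : singular R1 q1 p -> singular R1 q1 w ->
  proportional_at f1 f2 k p -> f1 p w != 0 -> forall t, R1 t <-> R2 (k * t).
Proof.
move=> R1p R1w kp pw t; have := singular_shift R1p kp pw t.
have E1 : eqmod R1 (q1 w + t) t by rewrite /eqmod addrK.
have E2 : eqmod R2 (q2 w + k * t) (k * t) by rewrite /eqmod addrK; apply/same.
by rewrite (eqmodP hR1 E1) (eqmodP hR2 E2).
Qed.

(* z is chosen with f1 (p, z) = 1, so that singular_shift applies to it;
   expanding along the singular w carries the congruence back to x. *)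
Lemma qform_transfer p w : singular R1 q1 p -> singular R1 q1 w ->
    proportional_at f1 f2 k p -> proportional_at f1 f2 k w -> f1 p w != 0 ->
  forall x, R2 (q2 x - k * q1 x).
Proof.
move=> R1p R1w kp kw pw x.
set b := (f1 p w)^-1 * (1 - f1 p x); set z := rscale w b + x.
set c := s1 b * f1 w x.
have pz : f1 p z != 0.
  by rewrite (sesqDr hf1) (sesqZr hs1 hf1) /b mulVKr ?hK // subrK oner_neq0.
have Ez : eqmod R2 (q2 z) (k * q1 z).
  have := (singular_shift R1p kp pz (- q1 z)).1.
  by rewrite addrN mulrN; apply; apply: codefect0 hR1.
have E1 : eqmod R1 (q1 z) (q1 x + c) := qf_expand G1 b x R1w.
have E2 := qf_expand G2 b x (proj1 (same w) R1w).
rewrite kw mulrA twist -mulrA -/c in E2.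
have kE1 : eqmod R2 (k * q1 z) (k * (q1 x + c)).
  by rewrite /eqmod -mulrBr; apply/(codefect_transfer R1p R1w kp pw).
have := eqmod_trans hR2 (eqmod_sym hR2 E2) (eqmod_trans hR2 Ez kE1).
by rewrite mulrDr eqmod_add2r.
Qed.

End Twist.

Section Line.
Variables p1 p2 : V.
Hypothesis line : is_line R1 q1 p1 p2.
Hypothesis nonrad : forall a b, (a != 0 \/ b != 0) ->
  ~ radical_point R1 q1 (rscale p1 a + rscale p2 b).

Lemma line_ratio : exists k, [/\ k != 0, proportional_at f1 f2 k p1,
  proportional_at f1 f2 k p2 & forall a, s2 a * k = k * s1 a].
Proof.
have R1p1 := line_singular1 line; have R1p2 := line_singular2 line.
have [w2 [_ p2w2]] := line_partner2 G1 hK line nonrad.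
have [v [p2v p1v]] := line_separating G1 hK line nonrad.
have [k k0 kp2] := exists_proportional_at R1p2 p2w2.
have kp1a a : a != 0 -> proportional_at f1 f2 k (rscale p1 a).
  move=> a0; have p1av : f1 (rscale p1 a) v != 0.
    by rewrite (sesqZl hf1) divr_mulf_neq0 ?(antimorph_eq0 hs1).
  have [ka _ kapa] := exists_proportional_at (singularZ G1 a R1p1) p1av.
  suff -> : k = ka by [].
  apply: esym (proportional_at_eq kapa kp2 _ p1av p2v p2w2).
  by have := (proj2 line) a 1; rewrite rscale1.
have kp1 : proportional_at f1 f2 k p1.
  by rewrite -[p1]rscale1; apply: kp1a (oner_neq0 K).
exists k; split=> // a; have [-> | a0] := eqVneq a 0.
  by rewrite (antimorph0 hs1) (antimorph0 (qf_anti G2)) mul0r mulr0.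
exact: proportional_at_twist kp1 (kp1a a a0) p1v.
Qed.

(* u is the point of the line orthogonal to w, so that w + u is singular and
   p1 separates w from u. *)
Lemma offline_ratio k w : (forall a, s2 a * k = k * s1 a) ->
    proportional_at f1 f2 k p1 -> proportional_at f1 f2 k p2 ->
    singular R1 q1 w -> f1 p1 w != 0 ->
  proportional_at f1 f2 k w.
Proof.
move=> twist kp1 kp2 R1w p1w.
have [a sa] := antimorph_surj hs1 (- (f1 p2 w / f1 p1 w)).
set u := rscale p1 a + rscale p2 1.
have uw : f1 u w = 0.
  by rewrite (sesq_combl hf1) sa (antimorph1 hs1) mul1r mulNr divrK ?hK // addNr.
have [y [_ uy]] :=
  line_partner G1 hK line nonrad (or_intror (oner_neq0 K)) (a := a).
have ku : proportional_at f1 f2 k u := proportional_at_comb twist a 1 kp1 kp2.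
have wp1 : f1 w p1 != 0.
  rewrite (sesq_herm hf1 p1 w) divr_mulf_neq0 ?(antimorph_eq0 hs1) //.
  exact: admissible_eps_neq0 (qf_admissible G1).
have R1u : singular R1 q1 u := proj2 line a 1.
have R1wu : singular R1 q1 (w + u).
  by have := proj2 (sing_spanP G1 hK R1u R1w) uw 1 1; rewrite !rscale1 addrC.
have [kw _ kww] := exists_proportional_at R1w wp1.
have up1 := line_orthogonal1 G1 hK line a 1.
by rewrite -(proportional_at_eq kww ku R1wu wp1 up1 uy).
Qed.

End Line.
End TwoForms.

Theorem mainTheorem12 (K : unitRingType) (V : lmodType K^c)
  (s1 s2 : K -> K) (e1 e2 : K) (R1 R2 : K -> Prop) (q1 q2 : V -> K) :
  divring_axiom K ->
  admissible s1 e1 -> admissible s2 e2 ->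
  gen_quad_form s1 e1 R1 q1 -> gen_quad_form s2 e2 R2 q2 ->
  nontrivial R1 q1 -> nontrivial R2 q2 ->
  same_polar_space R1 q1 R2 q2 ->
  nondeg_rank_ge2 R1 q1 ->
  exists k : K, [/\ k != 0,
    forall t, s2 t = k * s1 t * k^-1,
    e2 = k * s1 (k^-1) * e1,
    forall t, R2 t <-> exists u, R1 u /\ t = k * u
  & forall x, R2 (q2 x - k * q1 x)].
Proof.
move=> hK adm1 adm2 [cR1 qZ1 [f1 [hf1 qD1]]] [cR2 qZ2 [f2 [hf2 qD2]]]
  [x1 Nx1] [x2 Nx2] same_nz [p1 [p2 [line nonrad]]].
have G1 : quadratic_form s1 e1 R1 q1 f1 by split=> //; exists (q1 x1).
have G2 : quadratic_form s2 e2 R2 q2 f2 by split=> //; exists (q2 x2).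
have same x : singular R1 q1 x <-> singular R2 q2 x.
  have [-> | x0] := eqVneq x 0; last exact: same_nz.
  by split=> _; [apply: singular0 G2 | apply: singular0 G1].
have [k [k0 kp1 kp2 twist]] := line_ratio hK G1 G2 same line nonrad.
have [w [R1w p1w]] := line_partner1 G1 hK line nonrad.
have kw := offline_ratio hK G1 G2 same line nonrad twist kp1 kp2 R1w p1w.
have R1p1 := line_singular1 line.
exists k; split=> //.
- exact: twist_conj.
- exact (proportional_at_eps hK G1 G2 twist k0 kp1 kw p1w).
- have transfer := codefect_transfer hK G1 G2 same twist R1p1 R1w kp1 p1w.
  move=> t; split=> [R2t | [u [R1u ->]]]; last exact/transfer.
  by exists (k^-1 * t); rewrite transfer mulVKr ?hK.
- exact (qform_transfer hK G1 G2 same twist R1p1 R1w kp1 kw p1w).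
Qed.
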